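(* Let $u(t)=\sum_{i=1}^M s_i(t)e^{j2\pi f_it}$ be a signal in the class $\mathcal{M}_2$ described in the context, and consider an L-shaped array with $2N-1$ sensors ($N$ along each axis, with a common sensor at the origin) and distance $d$ between adjacent sensors. Let $\alpha_i=f_i\cos\theta_i$, $\beta_i=f_i\sin\theta_i$, and suppose they lie on the grid $\{\delta l\}_{l=-L_0}^{L_0}$ with $L_0=\frac{f_{\text{Nyq}}}{2\delta}$; set $L=2L_0+1$. Let $\mathbf{G}\in\mathbb{C}^{(2N-1)\times L^2}$ have entries, for $l=0,\dots,L^2-1$ with $l_1=(l\bmod L)-L_0$ and $l_2=\lfloor l/L\rfloor-L_0$: $G_{n,l}=e^{j2\pi\frac{dn}{c}\delta l_1}$ for $0\le n\le N-1$ and $G_{n,l}=e^{j2\pi\frac{d(n-N+1)}{c}\delta l_2}$ for $N\le n\le 2N-2$. Let $\mathbf{R}=\mathbf{G}\mathbf{R}_w^g\mathbf{G}^H$, where $\mathbf{R}_w^g$ is the $L^2\times L^2$ diagonal matrix whose only nonzero entries are $\mathbb{E}[|w_i|^2]$ at the $M$ indices corresponding to the pairs $(\alpha_i,\beta_i)$, and let $\mathbf{r}_w^g$ be the diagonal of $\mathbf{R}_w^g$, so that $\mathrm{vec}(\mathbf{R})=(\bar{\mathbf{G}}\odot\mathbf{G})\mathbf{r}_w^g$. If (c1) $d<\frac{c}{f_{\text{Nyq}}}$, (c2) $N>M$, and (c3) $\mathrm{spark}(\mathbf{G})=N+1$, then the equation $\mathrm{vec}(\mathbf{R})=(\bar{\mathbf{G}}\odot\mathbf{G})\mathbf{r}$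 has a unique $M$-sparse solution $\mathbf{r}=\mathbf{r}_w^g$.
   Context: Class $\mathcal{M}_2$: $u$ is complex valued with Fourier transform supported in $[-f_{\text{Nyq}}/2,f_{\text{Nyq}}/2]$, each $s_i$ has Fourier transform supported in $[-B/2,B/2]$, $\min_{i\neq j}|f_i-f_j|>B$; the $s_i$ are wide-sense stationary, zero mean, mutually uncorrelated with nonzero variances; transmission $i$ has unknown angle of arrival $\theta_i$ in the $xz$-plane, $|\theta_i|<90^\circ$, and $f_i\cos\theta_i$ (resp. $f_i\sin\theta_i$) are pairwise distinct. $c>0$ is the propagation speed. Each sensor multiplies by a common periodic function $p(t)$, low-pass filters and samples; $w_i[k]$ denotes the resulting baseband samples of transmission $i$, and the stacked sample vector $\mathbf{v}$ of both axes has correlation $\mathbb{E}[\mathbf{v}\mathbf{v}^H]=\mathbf{R}$. $\mathrm{vec}(\cdot)$ stacks columns, $\bar{\mathbf{G}}$ is the entrywise complex conjugate, $\odot$ is the Khatri–Rao (column-wise Kronecker) product, and $\mathrm{spark}$ is the smallest number of linearly dependent columns. A vector is $M$-sparse if it has at most $M$ nonzero entries. *)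

From HB Require Import structures.
From mathcomp Require Import all_boot all_order all_algebra.
From mathcomp Require Import reals trigo.
From mathcomp Require Import complex.

Set Implicit Arguments.
Unset Strict Implicit.
Unset Printing Implicit Defensive.

Import Order.TTheory GRing.Theory Num.Theory.
Local Open Scope ring_scope.

Definition cexp2pi {R : realType} (x : R) : R[i] :=
  Complex (cos (2 * pi * x)) (sin (2 * pi * x)).

Definition cconjmx {R : realType} {m n : nat} (A : 'M[R[i]]_(m, n)) :
  'M[R[i]]_(m, n) := map_mx (@conjc R) A.

Definition adjmx {R : realType} {m n : nat} (A : 'M[R[i]]_(m, n)) :
  'M[R[i]]_(n, m) := (cconjmx A)^T.

(* vec(.): stacks the columns; vec A at index i + m*j is A i j. *)
Definition vecmx {T : Type} {m n : nat} (A : 'M[T]_(m, n)) : 'cV[T]_(n * m) :=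
  (mxvec A^T)^T.

(* Khatri-Rao (column-wise Kronecker) product: column l of A ⊙ B is
   (col l A) ⊗ (col l B), entry a*p+b equal to A a l * B b l. *)
Definition khatri_rao {K : comNzRingType} {m p n : nat}
  (A : 'M[K]_(m, n)) (B : 'M[K]_(p, n)) : 'M[K]_(m * p, n) :=
  \matrix_(k < m * p, l < n) (mxvec (col l A *m (col l B)^T)) 0 k.

Definition vsupp {K : nzRingType} {n : nat} (x : 'cV[K]_n) : {set 'I_n} :=
  [set j | x j 0 != 0].

Definition sparse {K : nzRingType} {n : nat} (M : nat) (x : 'cV[K]_n) : Prop :=
  (#|vsupp x| <= M)%N.

Definition cols_dependent {K : nzRingType} {m n : nat} (A : 'M[K]_(m, n))
  (S : {set 'I_n}) : Prop :=
  exists x : 'cV[K]_n, x != 0 /\ vsupp x \subset S /\ A *m x = 0.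

Definition spark_is {K : nzRingType} {m n : nat} (A : 'M[K]_(m, n)) (k : nat) : Prop :=
  (exists S : {set 'I_n}, #|S| = k /\ cols_dependent A S) /\
  (forall S : {set 'I_n}, cols_dependent A S -> (k <= #|S|)%N).

(* The L-shaped array manifold on the grid: rows 0..N-1 are the x-axis
   sensors (n*d), rows N..2N-2 the z-axis sensors ((n-N+1)*d); column l
   corresponds to l1 = (l mod L) - L0, l2 = floor(l/L) - L0, L = 2L0+1. *)
Definition Lgrid (L0 : nat) : nat := (2 * L0 + 1)%N.

Definition Gmat {R : realType} (N L0 : nat) (d c delta : R) :
  'M[R[i]]_((2 * N - 1)%N, (Lgrid L0 * Lgrid L0)%N) :=
  \matrix_(n, l)
    let l1 : int := ((l %% Lgrid L0)%N)%:Z - L0%:Z in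
    let l2 : int := ((l %/ Lgrid L0)%N)%:Z - L0%:Z in
    if (n < N)%N then cexp2pi (d * n%:R / c * delta * l1%:~R)
    else cexp2pi (d * (n - N + 1)%N%:R / c * delta * l2%:~R).

Definition grid_index (L0 : nat) (a b : int) : nat :=
  (absz (a + L0%:Z)%R + Lgrid L0 * absz (b + L0%:Z)%R)%N.

Definition rwg {R : realType} (M L0 : nat) (a b : 'I_M -> int) (p : 'I_M -> R) :
  'cV[R[i]]_(Lgrid L0 * Lgrid L0) :=
  \col_(l < Lgrid L0 * Lgrid L0)
    \sum_(i < M | (l : nat) == grid_index L0 (a i) (b i)) ((p i)%:C)%C.

From HB Require Import structures.
From mathcomp Require Import all_boot all_order all_algebra.
From mathcomp Require Import reals trigo.
From mathcomp Require Import complex.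

Set Implicit Arguments.
Unset Strict Implicit.
Unset Printing Implicit Defensive.

Import Order.TTheory GRing.Theory Num.Theory.
Local Open Scope ring_scope.

(* Since spark G = N + 1 and M < N, any M + 1 columns of G are independent.
   Fix an index u and put S = {u} ∪ supp w. Independence of the columns in S
   gives a y with G^H y equal to the indicator of u on S. If
   G D_r G^H = G D_w G^H, then applying both sides to y shows that
   D_r G^H y - w_u e_u lies in ker G; it is supported on {u} ∪ supp r, at most
   M + 1 indices, so it vanishes, and its u-th entry reads r_u = w_u. *)

Section ColumnIndependence.
Variables (F : fieldType) (m n : nat) (A : 'M[F]_(m, n)).

Lemma spark_cols_independent (k : nat) (S : {set 'I_n}) :
  spark_is A k.+1 -> (#|S| <= k)%N -> ~ cols_dependent A S.
Proof. by move=> [_ spark_min] cardS /spark_min; rewrite ltnNge cardS. Qed.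

Lemma cols_independent_eq0 (S : {set 'I_n}) (x : 'cV[F]_n) :
  ~ cols_dependent A S -> A *m x = 0 -> vsupp x \subset S -> x = 0.
Proof.
move=> indep Ax0 suppS; apply/eqP/negPn/negP => x_neq0.
by apply: indep; exists x.
Qed.

(* With P the diagonal projection onto S, the columns of P K lie in ker A for
   the cokernel K of A P; independence on S forces P K = 0, hence row u of K
   vanishes and e_u is in the row space of A P. *)
Lemma cols_independent_indicator (S : {set 'I_n}) (u : 'I_n) :
  ~ cols_dependent A S -> u \in S ->
  exists y : 'rV[F]_m, forall s, s \in S -> (y *m A) 0 s = (s == u)%:R.
Proof.
move=> indep uS.
pose P : 'M[F]_n := diag_mx (\row_j (j \in S)%:R).
have P_supp (x : 'cV[F]_n) : vsupp (P *m x) \subset S.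
  apply/subsetP => j; rewrite inE mul_diag_mx !mxE.
  by case: (j \in S); rewrite ?mul0r ?eqxx.
have indicator_in_row_space : (delta_mx (0 : 'I_1) u <= A *m P)%MS.
  rewrite submxE -rowE.
  have PK0 : P *m cokermx (A *m P) = 0.
    apply/matrixP => i j; have colPK : col j (P *m cokermx (A *m P)) = 0.
      rewrite colE -mulmxA (cols_independent_eq0 indep _ (P_supp _)) //.
      by rewrite mulmxA mulmxA mulmx_coker mul0mx.
    by move/matrixP: colPK => /(_ i 0); rewrite !mxE.
  by move/(congr1 (row u)): PK0; rewrite row_mul row_diag_mx mxE uS scale1r -rowE row0 => ->.
case/submxP: indicator_in_row_space => y def_delta.
exists y => s sS; move/matrixP: def_delta => /(_ 0 s).
by rewrite mulmxA mul_mx_diag !mxE sS mulr1 eqxx /= eq_sym => ->.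
Qed.

End ColumnIndependence.

Section ComplexArray.
Variable R : realType.

Lemma cconjmx_cols_dependent (m n : nat) (G : 'M[R[i]]_(m, n)) S :
  cols_dependent (cconjmx G) S -> cols_dependent G S.
Proof.
case=> x [x_neq0 [suppS Gx0]]; exists (map_mx (@conjc R) x); split; [|split].
- apply: contra x_neq0 => /eqP/(congr1 (map_mx (@conjc R))).
  by rewrite map_mx0 => <-; apply/eqP/matrixP => i j; rewrite !mxE conjcK.
- apply: subset_trans suppS; apply/subsetP => j.
  by rewrite !inE mxE -[X in _ != X](conjc0 R) (can_eq (@conjcK R)).
- apply: (map_mx_inj (f := @conjc R)); rewrite map_mxM map_mx0 -Gx0.
  by congr (_ *m _); apply/matrixP => i j; rewrite !mxE; apply: conjcK.
Qed.

Lemma adjmx_mulmx_tr (m n : nat) (G : 'M[R[i]]_(m, n)) (y : 'rV_m) s :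
  (adjmx G *m y^T) s 0 = (y *m cconjmx G) 0 s.
Proof. by rewrite !mxE; apply: eq_bigr => k _; rewrite !mxE mulrC. Qed.

Lemma vecmx_inj (T : Type) (m n : nat) : injective (@vecmx T m n).
Proof.
move=> A B /trmx_inj /(congr1 vec_mx); rewrite !mxvecK; exact: trmx_inj.
Qed.

Lemma vecmx_mul_diag_adjmx (m n : nat) (G : 'M[R[i]]_(m, n)) (x : 'cV_n) :
  vecmx (G *m diag_mx x^T *m adjmx G) = khatri_rao (cconjmx G) G *m x.
Proof.
apply/matrixP => k z; rewrite ord1 {z}.
case/mxvec_indexP: k => i j.
rewrite mul_mx_diag /vecmx !mxE mxvecE !mxE.
apply: eq_bigr => l _.
by rewrite !mxE mxvecE !mxE big_ord1 !mxE mulrC mulrA.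
Qed.

Lemma sparse_rwg (M L0 : nat) (a b : 'I_M -> int) (p : 'I_M -> R) :
  sparse M (rwg L0 a b p).
Proof.
rewrite /sparse; set V := vsupp _.
pose source (l : 'I_(Lgrid L0 * Lgrid L0)) :=
  [pick i | (l : nat) == grid_index L0 (a i) (b i)].
have source_some l : l \in V -> exists i, source l = Some i /\
    (l : nat) = grid_index L0 (a i) (b i).
  rewrite inE mxE /source; case: pickP => [i /eqP|no_i]; first by exists i.
  by rewrite big_pred0 ?eqxx.
have source_inj : {in V &, injective source}.
  move=> l l' /source_some [i [-> li]] /source_some [i' [-> l'i']] [ii'].
  by apply: val_inj; rewrite /= li l'i' ii'.
rewrite -(card_in_imset source_inj).
apply: leq_trans (subset_leq_card (_ : source @: V \subset [set~ None])) _.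
  by apply/subsetP => o /imsetP [l /source_some [i [si _]] ->]; rewrite !inE si.
by rewrite cardsC1 card_option card_ord.
Qed.

Lemma mul_diag_adjmx_sparse_inj (m n k M : nat) (G : 'M[R[i]]_(m, n))
    (r w : 'cV_n) :
  spark_is G k.+1 -> (M < k)%N -> sparse M r -> sparse M w ->
  G *m diag_mx r^T *m adjmx G = G *m diag_mx w^T *m adjmx G -> r = w.
Proof.
move=> sparkG ltMk r_sparse w_sparse Gr_Gw.
apply/matrixP => u z; rewrite ord1 {z}.
have indep_U1 (T : {set 'I_n}) : (#|T| <= M)%N -> ~ cols_dependent G (u |: T).
  move=> cardT; apply: (spark_cols_independent sparkG).
  by rewrite cardsU1 (leq_trans _ ltMk) // -add1n leq_add ?leq_b1.
set S := u |: vsupp w.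
have [y hy] := cols_independent_indicator
  (contra_not (@cconjmx_cols_dependent _ _ G S) (indep_U1 _ w_sparse))
  (setU11 u (vsupp w)).
set g := adjmx G *m y^T.
have Gr_Gw_g : G *m (diag_mx r^T *m g) = G *m (diag_mx w^T *m g).
  by rewrite /g !mulmxA Gr_Gw.
have gS s : s \in S -> g s 0 = (s == u)%:R by move=> sS; rewrite adjmx_mulmx_tr hy.
clearbody g.
have Dw_g : diag_mx w^T *m g = w u 0 *: delta_mx u 0.
  apply/matrixP => j z; rewrite ord1 mul_diag_mx !mxE andbT.
  have [w_j0 | w_j0] := eqVneq (w j 0) 0.
    by case: (eqVneq j u) => [<-|]; rewrite w_j0 ?mulr0 !mul0r.
  have jS : j \in S by rewrite !inE w_j0 orbT.
  by rewrite gS //; case: (eqVneq j u) => [->|]; rewrite ?mulr0.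
set x := diag_mx r^T *m g - w u 0 *: delta_mx u 0.
have Gx0 : G *m x = 0 by rewrite mulmxBr -Dw_g Gr_Gw_g subrr.
have supp_x : vsupp x \subset u |: vsupp r.
  apply/subsetP => j; rewrite !inE /x mul_diag_mx !mxE andbT.
  case: (eqVneq j u) => //= ju; rewrite mulr0 subr0.
  by apply: contra_neq => ->; rewrite mul0r.
move/matrixP: (cols_independent_eq0 (indep_U1 _ r_sparse) Gx0 supp_x).
move=> /(_ u 0); rewrite /x mul_diag_mx !mxE gS ?setU11 // eqxx !mulr1.
exact: subr0_eq.
Qed.

End ComplexArray.

Theorem theorem5 (R : realType) (M N L0 : nat) (c d delta fNyq : R)
    (f theta : 'I_M -> R) (a b : 'I_M -> int) (p : 'I_M -> R) :
    0 < c -> 0 < d -> 0 < delta ->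
    fNyq = 2 * delta * L0%:R ->
    (* angles of arrival in (-90deg, 90deg) *)
    (forall i, `|theta i| < pi / 2) ->
    (* alpha_i = f_i cos theta_i, beta_i = f_i sin theta_i pairwise distinct *)
    (forall i j, i != j -> f i * cos (theta i) != f j * cos (theta j)) ->
    (forall i j, i != j -> f i * sin (theta i) != f j * sin (theta j)) ->
    (* alpha_i, beta_i lie on the grid {delta l}_{l=-L0}^{L0} *)
    (forall i, f i * cos (theta i) = delta * (a i)%:~R /\ `|a i| <= L0%:Z) ->
    (forall i, f i * sin (theta i) = delta * (b i)%:~R /\ `|b i| <= L0%:Z) ->
    (* E[|w_i|^2] nonzero *)
    (forall i, 0 < p i) ->
    let G := Gmat N L0 d c delta in
    let rw := rwg L0 a b p in
    let Rmx := G *m diag_mx rw^T *m adjmx G in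
    d < c / fNyq ->                     (* (c1) *)
    (M < N)%N ->                        (* (c2) *)
    spark_is G N.+1 ->                  (* (c3) *)
    (sparse M rw /\ vecmx Rmx = khatri_rao (cconjmx G) G *m rw) /\
    (forall r : 'cV[R[i]]_(Lgrid L0 * Lgrid L0),
        sparse M r -> vecmx Rmx = khatri_rao (cconjmx G) G *m r -> r = rw).
Proof.
move=> _ _ _ _ _ _ _ _ _ _ G rw Rmx _ ltMN sparkG.
have rw_sparse : sparse M rw by exact: sparse_rwg.
split; first by split; last exact: vecmx_mul_diag_adjmx.
move=> r r_sparse vecR_r.
apply: (mul_diag_adjmx_sparse_inj sparkG ltMN r_sparse rw_sparse).
by apply: vecmx_inj; rewrite vecmx_mul_diag_adjmx -vecR_r.
Qed.
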